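(* Let $r\geq 2$ and let $\mathcal{G}$, $\mathcal{H}$ and $\Gamma$ be $r$-uniform supertrees, where $\mathcal{G}$ and $\mathcal{H}$ have the same number of vertices. Let $u\in V(\mathcal{G})$ and $v\in V(\mathcal{H})$. If $\varphi(\mathcal{G},x)=\varphi(\mathcal{H},x)$ and $\varphi(\mathcal{G}-u,x)=\varphi(\mathcal{H}-v,x)$, then for every $w\in V(\Gamma)$ we have $\varphi(\mathcal{G}(u,w)\Gamma,x)=\varphi(\mathcal{H}(v,w)\Gamma,x)$.
   Context: An $r$-uniform hypergraph has every edge consisting of exactly $r$ vertices; an $r$-uniform supertree is a connected acyclic $r$-uniform hypergraph (for $r=2$, an ordinary tree). For an $r$-uniform hypergraph $\mathcal{H}$ on $n$ vertices, $m(\mathcal{H},k)$ denotes the number of $k$-matchings (sets of $k$ pairwise disjoint edges), with $m(\mathcal{H},0)=1$, and the matching polynomial is $\varphi(\mathcal{H},x)=\sum_{k\geq 0}(-1)^k m(\mathcal{H},k)x^{n-kr}$. For a vertex $u$, $\mathcal{H}-u$ is obtained by deleting $u$ and all edges containing $u$ (the other vertices of those edges remain). For disjoint hypergraphs $\mathcal{G},\Gamma$ with $u\in V(\mathcal{G})$, $w\in V(\Gamma)$, $\mathcal{G}(u,w)\Gamma$ denotes the hypergraph obtained from $\mathcal{G}\cup\Gamma$ by identifying $u$ with $w$. *)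

From mathcomp Require Import all_boot all_order all_algebra.
Set Implicit Arguments. Unset Strict Implicit. Unset Printing Implicit Defensive.
Import GRing.Theory.
Local Open Scope ring_scope.

Record hgraph (T : finType) := HGraph {
  hverts : {set T};
  hedges : {set {set T}} }.

Section Hyper.
Variable T : finType.
Implicit Types (H : hgraph T).

Definition uniform (r : nat) H : Prop :=
  forall e, e \in hedges H -> e \subset hverts H /\ #|e| = r.

Definition hadj H : rel T :=
  fun x y => [exists e in hedges H, (x \in e) && (y \in e)].

Definition hconnected H : Prop :=
  forall x y, x \in hverts H -> y \in hverts H -> connect (hadj H) x y.

(* Berge cycle: distinct vertices v_0..v_{k-1} (here vs = [:: v_0; ...])
   and distinct edges e_0..e_{k-1}, k >= 2, with v_i \in e_i and
   v_{i+1 mod k} \in e_i. *)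
Definition berge_cycle H (v0 : T) (vs : seq T) (es : seq {set T}) : Prop :=
  let cyc := v0 :: vs in
  [/\ (2 <= size cyc)%N, size es = size cyc, uniq cyc /\ uniq es,
      {subset es <= hedges H} &
      (forall i, (i < size cyc)%N ->
        (nth v0 cyc i \in nth set0 es i) /\
        (nth v0 cyc ((i.+1) %% size cyc) \in nth set0 es i)) ].

Definition hacyclic H : Prop :=
  forall v0 vs es, ~ berge_cycle H v0 vs es.

Definition supertree (r : nat) H : Prop :=
  [/\ uniform r H, hconnected H & hacyclic H].

Definition is_matching H (M : {set {set T}}) : bool :=
  (M \subset hedges H) &&
  [forall e1 in M, forall e2 in M, (e1 != e2) ==> [disjoint e1 & e2]].

Definition nmatch H (k : nat) : nat :=
  #|[set M : {set {set T}} | is_matching H M & #|M| == k]|.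

Definition matching_poly (r : nat) H : {poly int} :=
  \sum_(k < #|hedges H|.+1)
     ((-1) ^+ k * (nmatch H k)%:R) *: 'X^(#|hverts H| - k * r).

Definition hdelv H (u : T) : hgraph T :=
  HGraph (hverts H :\ u) [set e in hedges H | u \notin e].
End Hyper.

(* G(u,w)Gamma: disjoint union of G (on T1) and Gamma (on T2), realised on
   T1 + T2, with w identified with u. *)
Definition coalesce (T1 T2 : finType) (G : hgraph T1) (u : T1)
    (Ga : hgraph T2) (w : T2) : hgraph (T1 + T2)%type :=
  let g := fun x : T2 => if x == w then @inl T1 T2 u else inr x in
  HGraph ([set (@inl T1 T2 x) | x in hverts G] :|: [set (@inr T1 T2 x) | x in hverts Ga :\ w])
         ([set [set (@inl T1 T2 x) | x in e] | e : {set T1} in hedges G] :|: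
          [set g @: e | e : {set T2} in hedges Ga]).

(* The matching polynomial of an r-uniform hypergraph H on n vertices has the
   coefficient (-1)^k m(H,k) at x^(n - kr), so it determines and is determined
   by n and the matching numbers m(H,k).  A matching of G(u,w)Gamma splits
   uniquely into a matching M' of Gamma and a matching of G, the two not both
   covering the identified vertex; if M' covers w the part in G is a matching
   of G - u.  Hence m(G(u,w)Gamma,k) only depends on the numbers m(G,j) and
   m(G-u,j), which agree with those of H and H - v. *)

From mathcomp Require Import all_boot all_order all_algebra.
From mathcomp Require Import zify.
Set Implicit Arguments. Unset Strict Implicit. Unset Printing Implicit Defensive.
Import GRing.Theory Num.Theory.

Section MatchingNumbers.
Variable T : finType.
Implicit Types (H : hgraph T) (M : {set {set T}}).

Lemma nmatch_eq0_edges H k : (#|hedges H| < k)%N -> nmatch H k = 0%N.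
Proof.
move=> lt_Ek; apply/eqP; rewrite cards_eq0; apply/eqP/setP => M.
rewrite !inE; apply/negP => /andP[/andP[sub _] /eqP cardM].
by move: (subset_leq_card sub); rewrite cardM leqNgt lt_Ek.
Qed.

Lemma nmatch_eq0_verts r H k :
  uniform r H -> (#|hverts H| < k * r)%N -> nmatch H k = 0%N.
Proof.
move=> U lt_Vkr; apply/eqP; rewrite cards_eq0; apply/eqP/setP => M.
rewrite !inE; apply/negP => /andP[/andP[sub dis] /eqP cardM].
have triM : trivIset M.
  apply/trivIsetP => A B AM BM neqAB.
  by move/forall_inP: dis => /(_ A AM) /forall_inP /(_ B BM) /implyP /(_ neqAB).
have card_cover : #|cover M| = (k * r)%N.
  rewrite -(eqP triM) (eq_bigr (fun _ => r)) ?sum_nat_const ?cardM // => B BM.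
  by case: (U B (subsetP sub B BM)).
have : (#|cover M| <= #|hverts H|)%N.
  apply/subset_leq_card/bigcupsP => B BM; by case: (U B (subsetP sub B BM)).
by rewrite card_cover leqNgt lt_Vkr.
Qed.

Definition saturates M (x : T) : bool := [exists e in M, x \in e].

Lemma is_matching_hdelv H u M :
  is_matching (hdelv H u) M = is_matching H M && ~~ saturates M u.
Proof.
rewrite /is_matching /= andbAC; congr (_ && _).
apply/subsetP/andP => [sub | [sub unsat] e eM].
  split; first by apply/subsetP => e /sub; rewrite inE => /andP[].
  by apply/exists_inP => -[e /sub]; rewrite inE => /andP[_ /negP].
rewrite inE (subsetP sub _ eM) /=.
by apply: contra unsat => ue; apply/exists_inP; exists e.
Qed.

Lemma uniform_hdelv r H u : uniform r H -> uniform r (hdelv H u).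
Proof.
move=> U e; rewrite inE => /andP[eH ue]; case: (U e eH) => sub ->; split => //.
apply/subsetP => x xe; rewrite !inE (subsetP sub _ xe) andbT.
by apply: contraNneq ue => <-.
Qed.

End MatchingNumbers.

Section MatchingPolynomial.
Local Open Scope ring_scope.

Lemma matching_poly_widen (T : finType) r (H : hgraph T) N :
  (#|hedges H| < N)%N ->
  matching_poly r H =
    \sum_(k < N) ((-1) ^+ k * (nmatch H k)%:R) *: 'X^(#|hverts H| - k * r).
Proof.
move=> lt_EN; rewrite /matching_poly.
rewrite (big_ord_widen _
  (fun k => ((-1) ^+ k * (nmatch H k)%:R) *: 'X^(#|hverts H| - k * r)) lt_EN).
rewrite [RHS](bigID (fun i : 'I_N => (i < #|hedges H|.+1)%N)) /=.
rewrite [X in _ = _ + X]big1 ?addr0 // => i; rewrite -leqNgt => lt_Ei.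
by rewrite nmatch_eq0_edges // mulr0 scale0r.
Qed.

(* Distinct k give distinct exponents n - kr as long as kr <= n; the terms
   with kr > n vanish by nmatch_eq0_verts. *)
Lemma coef_matching_poly (T : finType) r (H : hgraph T) k :
  (0 < r)%N -> uniform r H -> (k * r <= #|hverts H|)%N ->
  (matching_poly r H)`_(#|hverts H| - k * r) = (-1) ^+ k * (nmatch H k)%:R.
Proof.
move=> r_gt0 U le_krV; set N := (#|hedges H| + k).+1.
have lt_kN : (k < N)%N by lia.
rewrite (@matching_poly_widen _ _ _ N) ?coef_sum; last by lia.
rewrite (bigD1 (Ordinal lt_kN)) //= coefZ coefXn eqxx mulr1 big1 ?addr0 //.
move=> j /eqP neq_jk; rewrite coefZ coefXn.
have [le_jrV | lt_Vjr] := leqP (j * r) #|hverts H|; last first.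
  by rewrite (nmatch_eq0_verts U lt_Vjr) mulr0 mul0r.
case: eqP => [eq_exp | _]; last by rewrite mulr0.
case: neq_jk; apply: val_inj => /=; apply/eqP.
by rewrite -(eqn_pmul2r r_gt0); apply/eqP; lia.
Qed.

Lemma nmatch_eq_of_matching_poly (T1 T2 : finType) r
    (G : hgraph T1) (H : hgraph T2) :
  (0 < r)%N -> uniform r G -> uniform r H -> #|hverts G| = #|hverts H| ->
  matching_poly r G = matching_poly r H -> forall k, nmatch G k = nmatch H k.
Proof.
move=> r_gt0 UG UH eqV eq_poly k.
have [le_krV | lt_Vkr] := leqP (k * r) #|hverts G|; last first.
  by rewrite (nmatch_eq0_verts UG lt_Vkr) (nmatch_eq0_verts UH) // -eqV.
have := coef_matching_poly r_gt0 UG le_krV.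
rewrite eq_poly eqV coef_matching_poly -?eqV //.
by move/(congr1 (fun t => (-1) ^+ k * t)); rewrite !signrMK => /eqP; rewrite eqr_nat => /eqP.
Qed.

Lemma eq_matching_poly (T1 T2 : finType) r (G : hgraph T1) (H : hgraph T2) :
  #|hverts G| = #|hverts H| -> (forall k, nmatch G k = nmatch H k) ->
  matching_poly r G = matching_poly r H.
Proof.
move=> eqV eq_nmatch; set N := (#|hedges G| + #|hedges H|).+1.
rewrite (@matching_poly_widen _ _ G N) ?(@matching_poly_widen _ _ H N); try lia.
by apply: eq_bigr => k _; rewrite eq_nmatch eqV.
Qed.

End MatchingPolynomial.

Section Coalescence.
Variables (T1 T3 : finType) (G : hgraph T1) (u : T1) (Ga : hgraph T3) (w : T3).
Variable r : nat.
Hypotheses (r_gt1 : (1 < r)%N) (Ga_uniform : uniform r Ga).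

Local Notation coal := (coalesce G u Ga w).

Definition glue (x : T3) : T1 + T3 := if x == w then inl u else inr x.
Definition liftL (e : {set T1}) : {set T1 + T3} := inl @: e.
Definition liftR (e : {set T3}) : {set T1 + T3} := glue @: e.

Lemma glue_inj : injective glue.
Proof.
rewrite /glue => x y; case: eqP => [->|_]; case: eqP => [->|_] //.
by case.
Qed.

Lemma liftL_inj : injective liftL. Proof. exact: imset_inj inl_inj. Qed.
Lemma liftR_inj : injective liftR. Proof. exact: imset_inj glue_inj. Qed.

Lemma hedges_coalesce : hedges coal = liftL @: hedges G :|: liftR @: hedges Ga.
Proof. by []. Qed.

Lemma disjoint_liftL e1 e2 : [disjoint liftL e1 & liftL e2] = [disjoint e1 & e2].
Proof. exact: imset_disjoint inl_inj. Qed.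

Lemma disjoint_liftR e1 e2 : [disjoint liftR e1 & liftR e2] = [disjoint e1 & e2].
Proof. exact: imset_disjoint glue_inj. Qed.

Lemma disjoint_liftLR e1 e2 :
  [disjoint liftL e1 & liftR e2] = ~~ ((u \in e1) && (w \in e2)).
Proof.
rewrite -setI_eq0; apply/eqP/idP => [disj | ].
  apply/negP => /andP[ue1 we2]; have : inl u \in liftL e1 :&: liftR e2.
    by rewrite inE imset_f //; apply/imsetP; exists w; rewrite /glue ?eqxx.
  by rewrite disj inE.
move=> not_both; apply/setP => z; rewrite !inE.
apply/negP => /andP[/imsetP[x xe1 ->] /imsetP[y ye2]]; rewrite /glue.
by case: eqP => // eq_yw [eq_xu]; rewrite -eq_xu -eq_yw xe1 ye2 in not_both.
Qed.

(* This is where r >= 2 is needed: an edge of Gamma has a vertex other than w,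
   which lands in the T3 copy. *)
Lemma liftL_neq_liftR e1 e2 : e2 \in hedges Ga -> liftL e1 != liftR e2.
Proof.
move=> e2Ga; case: (Ga_uniform e2Ga) => _ card_e2.
have [y ye2 yw] : exists2 y, y \in e2 & y != w.
  have : ~~ (e2 \subset [set w]).
    by apply/negP => /subset_leq_card; rewrite cards1 card_e2; lia.
  by case/subsetPn => y ye2; rewrite inE => yw; exists y.
apply/eqP => eq_lift; have : glue y \in liftR e2 by apply: imset_f.
by rewrite -eq_lift /glue (negPf yw) => /imsetP[].
Qed.

Local Notation pair_t := ({set {set T3}} * {set {set T1}})%type.

Definition join_matchings (p : pair_t) : {set {set T1 + T3}} :=
  liftR @: p.1 :|: liftL @: p.2.

Definition compatible_matchings k : {set pair_t} :=
  [set p : pair_t | [&& is_matching Ga p.1, is_matching G p.2,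
     (#|p.1| + #|p.2| == k)%N & ~~ (saturates p.2 u && saturates p.1 w)]].

Lemma card_join_matchings (p : pair_t) :
  p.1 \subset hedges Ga -> #|join_matchings p| = (#|p.1| + #|p.2|)%N.
Proof.
move=> sub1; rewrite cardsU.
have -> : liftR @: p.1 :&: liftL @: p.2 = set0.
  apply/setP => A; rewrite !inE.
  apply/negP => /andP[/imsetP[e2 e2p ->] /imsetP[e1 _ eq_lift]].
  by have := liftL_neq_liftR e1 (subsetP sub1 _ e2p); rewrite eq_lift eqxx.
by rewrite cards0 subn0 !card_imset //; [exact: liftL_inj | exact: liftR_inj].
Qed.

Lemma join_matchingsK (p : pair_t) : p.1 \subset hedges Ga ->
  p = ([set e in hedges Ga | liftR e \in join_matchings p],
       [set e | liftL e \in join_matchings p]).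
Proof.
case: p => M2 M1 /= sub2; congr pair; apply/setP => e; rewrite !inE.
  rewrite (mem_imset _ _ liftR_inj); case eM2: (e \in M2).
    by rewrite (subsetP sub2 _ eM2).
  case eGa: (e \in hedges Ga) => //=; apply/esym/negP => /imsetP[e' _ eq_lift].
  by have := liftL_neq_liftR e' eGa; rewrite eq_lift eqxx.
rewrite (mem_imset _ _ liftL_inj); case: imsetP => // -[e' e'M2 eq_lift].
by have := liftL_neq_liftR e (subsetP sub2 _ e'M2); rewrite eq_lift eqxx.
Qed.

Lemma compatible_matchings_sub k (p : pair_t) :
  p \in compatible_matchings k -> p.1 \subset hedges Ga.
Proof. by rewrite inE => /and4P[/andP[]]. Qed.

Lemma join_matchings_inj k : {in compatible_matchings k &, injective join_matchings}.
Proof.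
move=> p q /compatible_matchings_sub subp /compatible_matchings_sub subq eq_join.
by rewrite (join_matchingsK subp) (join_matchingsK subq) eq_join.
Qed.

Lemma join_compatible_matchings k (p : pair_t) : p \in compatible_matchings k ->
  is_matching coal (join_matchings p) && (#|join_matchings p| == k).
Proof.
move=> pk; have sub2 := compatible_matchings_sub pk; move: pk.
rewrite inE => /and4P[/andP[s2 d2] /andP[s1 d1] card_p compat].
rewrite card_join_matchings // card_p andbT; apply/andP; split.
  rewrite hedges_coalesce; apply/subsetP => A; rewrite !inE.
  case/orP => /imsetP[e eM ->]; apply/orP; [right | left]; apply: imset_f.
    exact: (subsetP s2).
  exact: (subsetP s1).
apply/forall_inP => A AM; apply/forall_inP => B BM; apply/implyP.
have sat (X : {set {set T1}}) (Y : {set {set T3}}) e1 e2 :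
    e1 \in X -> e2 \in Y -> u \in e1 -> w \in e2 -> saturates X u && saturates Y w.
  by move=> e1X e2Y ue1 we2; apply/andP; split; apply/exists_inP; eexists; eauto.
move: AM BM; rewrite !inE => /orP[]/imsetP[e1 e1M ->] /orP[]/imsetP[e2 e2M ->] neq.
- rewrite disjoint_liftR; move/forall_inP: d2 => /(_ e1 e1M)/forall_inP/(_ e2 e2M).
  by move/implyP; apply; apply: contraNneq neq => ->.
- by rewrite disjoint_sym disjoint_liftLR; apply: contra compat => /andP[]; apply: sat.
- by rewrite disjoint_liftLR; apply: contra compat => /andP[]; apply: sat.
- rewrite disjoint_liftL; move/forall_inP: d1 => /(_ e1 e1M)/forall_inP/(_ e2 e2M).
  by move/implyP; apply; apply: contraNneq neq => ->.
Qed.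

Lemma split_coalesce_matching k (M : {set {set T1 + T3}}) :
  is_matching coal M -> #|M| = k ->
  exists2 p, p \in compatible_matchings k & M = join_matchings p.
Proof.
case/andP => subM disjM cardM.
pose p := ([set e in hedges Ga | liftR e \in M], [set e in hedges G | liftL e \in M]).
have sub2 : p.1 \subset hedges Ga by apply/subsetP => e; rewrite inE => /andP[].
have joinM : join_matchings p = M.
  apply/setP => A; rewrite !inE; apply/idP/idP.
    by case/orP => /imsetP[e]; rewrite inE => /andP[_ eM] ->.
  move=> AM; move: (subsetP subM A AM).
  rewrite hedges_coalesce inE => /orP[]/imsetP[e eE eq_A]; apply/orP;
    [right | left]; by apply/imsetP; exists e; rewrite // inE eE -eq_A AM.
have dis A B : A \in M -> B \in M -> A != B -> [disjoint A & B].
  by move=> AM BM; move/forall_inP: disjM => /(_ A AM)/forall_inP/(_ B BM)/implyP.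
exists p => //; rewrite inE; apply/and4P; split.
- rewrite /is_matching sub2; apply/forall_inP => e1; rewrite inE => /andP[_ e1M].
  apply/forall_inP => e2; rewrite inE => /andP[_ e2M]; apply/implyP => neq.
  by rewrite -disjoint_liftR; apply: dis; rewrite ?(inj_eq liftR_inj).
- apply/andP; split; first by apply/subsetP => e; rewrite inE => /andP[].
  apply/forall_inP => e1; rewrite inE => /andP[_ e1M].
  apply/forall_inP => e2; rewrite inE => /andP[_ e2M]; apply/implyP => neq.
  by rewrite -disjoint_liftL; apply: dis; rewrite ?(inj_eq liftL_inj).
- by rewrite -card_join_matchings // joinM cardM.
- apply/negP => /andP[/exists_inP[e1 + ue1] /exists_inP[e2 + we2]].
  rewrite !inE => /andP[_ e1M] /andP[e2Ga e2M].
  by have := dis _ _ e1M e2M (liftL_neq_liftR e1 e2Ga); rewrite disjoint_liftLR ue1 we2.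
Qed.

Lemma nmatch_coalesce_pairs k : nmatch coal k = #|compatible_matchings k|.
Proof.
rewrite -(card_in_imset (join_matchings_inj (k := k))); apply: eq_card => M.
rewrite inE; apply/andP/imsetP => [[matM /eqP cardM] | [p pk ->]].
  exact: split_coalesce_matching.
by apply/andP; exact: join_compatible_matchings.
Qed.

Lemma card_compatible_completions (M2 : {set {set T3}}) k :
  #|[set M1 | [&& is_matching G M1, (#|M2| + #|M1| == k)%N &
                 ~~ (saturates M1 u && saturates M2 w)]]| =
  if (#|M2| <= k)%N
  then nmatch (if saturates M2 w then hdelv G u else G) (k - #|M2|)
  else 0%N.
Proof.
case: leqP => [le_M2k | lt_kM2]; last first.
  apply/eqP; rewrite cards_eq0; apply/eqP/setP => M1; rewrite !inE.
  by apply/negP => /and3P[_ /eqP ? _]; lia.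
apply: eq_card => M1; rewrite !inE.
have -> : (#|M2| + #|M1| == k)%N = (#|M1| == k - #|M2|)%N.
  by apply/eqP/eqP; lia.
case: (saturates M2 w); rewrite /= ?andbT ?andbF ?andbT //.
by rewrite is_matching_hdelv -andbA [~~ _ && _]andbC.
Qed.

Lemma nmatch_coalesce k :
  nmatch coal k = \sum_(M2 | is_matching Ga M2)
    if (#|M2| <= k)%N
    then nmatch (if saturates M2 w then hdelv G u else G) (k - #|M2|)
    else 0%N.
Proof.
rewrite nmatch_coalesce_pairs.
under eq_bigr do rewrite -card_compatible_completions -sum1_card.
rewrite pair_big_dep -sum1_card; apply: eq_bigl => p; rewrite !inE.
by case: (is_matching Ga p.1).
Qed.

End Coalescence.

Lemma card_hverts_coalesce (T1 T3 : finType) (G : hgraph T1) u (Ga : hgraph T3) w :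
  #|hverts (coalesce G u Ga w)| = (#|hverts G| + #|hverts Ga :\ w|)%N.
Proof.
rewrite /= cardsU.
have -> : [set inl x | x in hverts G] :&: [set inr x | x in hverts Ga :\ w] = set0.
  by apply/setP => z; rewrite !inE; apply/negP => /andP[/imsetP[x _ ->] /imsetP[]].
by rewrite cards0 subn0 !card_imset //; [exact: inr_inj | exact: inl_inj].
Qed.

Theorem lemma8 (r : nat) (T1 T2 T3 : finType)
  (G : hgraph T1) (H : hgraph T2) (Ga : hgraph T3) (u : T1) (v : T2) :
  (2 <= r)%N ->
  supertree r G -> supertree r H -> supertree r Ga ->
  #|hverts G| = #|hverts H| ->
  u \in hverts G -> v \in hverts H ->
  matching_poly r G = matching_poly r H ->
  matching_poly r (hdelv G u) = matching_poly r (hdelv H v) ->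
  forall w : T3, w \in hverts Ga ->
    matching_poly r (coalesce G u Ga w) = matching_poly r (coalesce H v Ga w).
Proof.
move=> r_gt1 [UG _ _] [UH _ _] [UGa _ _] eqV uG vH eq_poly eq_poly_del w _.
have r_gt0 : (0 < r)%N by lia.
have eq_nmatch := nmatch_eq_of_matching_poly r_gt0 UG UH eqV eq_poly.
have eqV_del : #|hverts (hdelv G u)| = #|hverts (hdelv H v)|.
  by move: eqV; rewrite /= (cardsD1 u) (cardsD1 v) uG vH /=; lia.
have eq_nmatch_del := nmatch_eq_of_matching_poly r_gt0
  (uniform_hdelv (u := u) UG) (uniform_hdelv (u := v) UH) eqV_del eq_poly_del.
apply: eq_matching_poly; first by rewrite !card_hverts_coalesce eqV.
move=> k; rewrite (nmatch_coalesce G u w r_gt1 UGa) (nmatch_coalesce H v w r_gt1 UGa).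
by apply: eq_bigr => M2 _; case: saturates; rewrite ?eq_nmatch ?eq_nmatch_del.
Qed.
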